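(* Let $\lambda<0$ and let $p(x;\theta)=(1+\lambda\,\theta\cdot F(x))_+^{1/\lambda}e^{-\varphi(\theta)}$, $\theta\in\Theta\subset\mathbb{R}^d$, be a $\lambda$-exponential family on a state space $\mathcal{X}$ with reference measure $\nu$, satisfying the standing assumptions described in the context. Let $x_1,\ldots,x_n\in\mathcal{S}$ be data points and put $y_i=F(x_i)\in\mathbb{R}^d$. If $\hat\theta\in\Theta$ is a maximum likelihood estimate, i.e. $\hat\theta$ maximizes $$\ell(\theta)=\sum_{i=1}^n\Big(\tfrac{1}{\lambda}\log(1+\lambda\,\theta\cdot y_i)-\varphi(\theta)\Big)$$ over $\Theta$, then $\hat\eta:=\nabla^{(\lambda)}\varphi(\hat\theta)$ satisfies $$\hat\eta=\sum_{i=1}^n w_i(\hat\theta)\,y_i,\qquad w_i(\theta):=\frac{1/(1+\lambda\,\theta\cdot y_i)}{\sum_{j=1}^n 1/(1+\lambda\,\theta\cdot y_j)},\quad i=1,\ldots,n.$$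
   Context: Setting: $\mathcal{X}$ is a state space with reference measure $\nu$, $\lambda\in\mathbb{R}\setminus\{0\}$ is fixed, $F=(F_1,\ldots,F_d):\mathcal{X}\to\mathbb{R}^d$ is a vector of statistics, $z_+=\max\{z,0\}$, and the $\lambda$-exponential family is $p(x;\theta)=(1+\lambda\theta\cdot F(x))_+^{1/\lambda}e^{-\varphi(\theta)}$, where the potential $\varphi(\theta)$ is defined by the normalization $\int_{\mathcal{X}}p(x;\theta)\,d\nu(x)=1$. The $\lambda$-gradient of a differentiable function $f$ is $\nabla^{(\lambda)}f(\theta):=\nabla f(\theta)/(1-\lambda\nabla f(\theta)\cdot\theta)$. The $\lambda$-conjugate of $f$ is $f^{(\lambda)}(y)=\sup_x\{\frac1\lambda\log(1+\lambda x\cdot y)-f(x)\}$. Standing assumptions: $\lambda<0$; $\Theta=\{\theta\in\mathbb{R}^d:\int(1+\lambda\theta\cdot F(x))_+^{1/\lambda}d\nu(x)<\infty\}$ is the natural parameter set; the family satisfies the regularity condition of Wong and Zhang (2022, Condition III.10), under which $\varphi$ is differentiable on $\Theta$ with $1-\lambda\nabla\varphi(\theta)\cdot\theta>0$, the dual potential $\psi(\eta):=\sup_{\theta'\in\Theta}\{\frac1\lambda\log(1+\lambda\theta'\cdot\eta)-\varphi(\theta')\}$ is such that $\frac1\lambda(e^{\lambda\psi}-1)$ is strictly convex on $\Xi$, and $\nabla^{(\lambda)}\varphi:\Theta\to\Xi$ is a diffeomorphism with inverse $\nabla^{(\lambda)}\psi$; moreover the dual parameter set $\Xi:=\nabla^{(\lambda)}\varphi(\Theta)$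 is convex and contains the common support $\mathcal{S}:=\{x\in\mathcal{X}:p(x;\theta)>0\}$ of the family. *)

From HB Require Import structures.
From mathcomp Require Import all_boot all_order all_algebra.
From mathcomp Require Import all_classical all_reals all_analysis.
Set Implicit Arguments. Unset Strict Implicit. Unset Printing Implicit Defensive.
Import Order.TTheory GRing.Theory Num.Theory.
Import numFieldNormedType.Exports.
Local Open Scope classical_set_scope.
Local Open Scope ring_scope.

Section LambdaExp.
Variable R : realType.

Definition dotp (d : nat) (u v : 'rV[R]_d) : R := \sum_(i < d) u 0 i * v 0 i.

Definition grad (d : nat) (f : 'rV[R]_d -> R) (t : 'rV[R]_d) : 'rV[R]_d :=
  \row_(i < d) ('D_(delta_mx 0 i) f t).

Definition lgrad (lam : R) (d : nat) (f : 'rV[R]_d -> R) (t : 'rV[R]_d) : 'rV[R]_d :=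
  (1 - lam * dotp (grad f t) t)^-1 *: grad f t.

Variables (dX : measure_display) (X : measurableType dX).

(* (1 + lam theta.F(x))_+^{1/lam}   (powR 0 r = 0 for r <> 0) *)
Definition lkernel (lam : R) (d : nat) (F : X -> 'rV[R]_d) (t : 'rV[R]_d) (x : X) : R :=
  powR (Num.max (1 + lam * dotp t (F x)) 0) lam^-1.

Definition natparam (lam : R) (d : nat) (nu : {measure set X -> \bar R})
  (F : X -> 'rV[R]_d) : set 'rV[R]_d :=
  [set t | (\int[nu]_x (lkernel lam F t x)%:E < +oo)%E].

(* potential: normalisation  int p(x;theta) dnu = 1 *)
Definition potential (lam : R) (d : nat) (nu : {measure set X -> \bar R})
  (F : X -> 'rV[R]_d) (t : 'rV[R]_d) : R :=
  ln (fine (\int[nu]_x (lkernel lam F t x)%:E)).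

Definition ldensity (lam : R) (d : nat) (nu : {measure set X -> \bar R})
  (F : X -> 'rV[R]_d) (t : 'rV[R]_d) (x : X) : R :=
  lkernel lam F t x * expR (- potential lam nu F t).

Definition lsupport (lam : R) (d : nat) (nu : {measure set X -> \bar R})
  (F : X -> 'rV[R]_d) : set X :=
  [set x | forall t, natparam lam nu F t -> 0 < ldensity lam nu F t x].

(* dual potential psi(eta) = sup_{theta' in Theta} (1/lam log(1+lam theta'.eta) - phi(theta'))
   (terms with 1 + lam theta'.eta <= 0 are -oo and are dropped) *)
Definition dualpot (lam : R) (d : nat) (nu : {measure set X -> \bar R})
  (F : X -> 'rV[R]_d) (e : 'rV[R]_d) : R :=
  sup [set v | exists2 t, (natparam lam nu F t /\ 0 < 1 + lam * dotp t e) &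
        v = lam^-1 * ln (1 + lam * dotp t e) - potential lam nu F t].

Definition dualparam (lam : R) (d : nat) (nu : {measure set X -> \bar R})
  (F : X -> 'rV[R]_d) : set 'rV[R]_d :=
  lgrad lam (potential lam nu F) @` natparam lam nu F.

(* Standing assumptions (consequences of Wong--Zhang Condition III.10) *)
Definition standing_assumptions (lam : R) (d : nat) (nu : {measure set X -> \bar R})
  (F : X -> 'rV[R]_d) : Prop :=
  let Th := natparam lam nu F in
  let phi := potential lam nu F in
  let Xi := dualparam lam nu F in
  let psi := dualpot lam nu F in
  [/\ lam < 0,
      (forall i, measurable_fun setT (fun x => F x 0 i)),
      open Th &
      [/\
      (forall x t1 t2, Th t1 -> Th t2 ->
         (0 < ldensity lam nu F t1 x) = (0 < ldensity lam nu F t2 x)) &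
      [/\ (forall t, Th t -> differentiable phi t /\ 0 < 1 - lam * dotp (grad phi t) t),
      (forall e1 e2 s, Xi e1 -> Xi e2 -> e1 != e2 -> 0 < s < 1 ->
         (expR (lam * psi (s *: e1 + (1 - s) *: e2)) - 1) / lam <
         s * ((expR (lam * psi e1) - 1) / lam) + (1 - s) * ((expR (lam * psi e2) - 1) / lam)),
      (* grad^(lam) phi : Theta -> Xi is a diffeomorphism with inverse grad^(lam) psi *)
      [/\ (forall e, Xi e -> differentiable psi e /\ 0 < 1 - lam * dotp (grad psi e) e),
          (forall t, Th t -> lgrad lam psi (lgrad lam phi t) = t),
          (forall e, Xi e -> Th (lgrad lam psi e) /\ lgrad lam phi (lgrad lam psi e) = e),
          {in Th, continuous (lgrad lam phi)} &
          {in Xi, continuous (lgrad lam psi)}],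
      (forall e1 e2 s, Xi e1 -> Xi e2 -> 0 <= s <= 1 -> Xi (s *: e1 + (1 - s) *: e2)) &
      F @` lsupport lam nu F `<=` Xi]]].

Definition loglik (lam : R) (d n : nat) (nu : {measure set X -> \bar R})
  (F : X -> 'rV[R]_d) (y : 'I_n -> 'rV[R]_d) (t : 'rV[R]_d) : R :=
  \sum_(i < n) (lam^-1 * ln (1 + lam * dotp t (y i)) - potential lam nu F t).

Definition lweight (lam : R) (d n : nat) (y : 'I_n -> 'rV[R]_d) (t : 'rV[R]_d) (i : 'I_n) : R :=
  (1 + lam * dotp t (y i))^-1 / \sum_(j < n) (1 + lam * dotp t (y j))^-1.

End LambdaExp.

(* A data point lies in the common support, where the density is positive; as
   lam <> 0 this forces c_i := 1 + lam thetahat.y_i > 0, so the log-likelihood is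
   differentiable at the interior maximiser thetahat, and Fermat's rule along the
   coordinate axes gives n grad phi(thetahat) = sum_i y_i / c_i.  Pairing this with
   thetahat and using lam thetahat.y_i = c_i - 1 gives
   n (1 - lam grad phi(thetahat).thetahat) = sum_i 1 / c_i, and dividing the two
   identities yields the weights w_i = (1 / c_i) / sum_j (1 / c_j). *)
From HB Require Import structures.
From mathcomp Require Import all_boot all_order all_algebra.
From mathcomp Require Import all_classical all_reals all_analysis.
From mathcomp Require Import ring.
Import Order.TTheory GRing.Theory Num.Theory.
Import numFieldNormedType.Exports.
Local Open Scope classical_set_scope.
Local Open Scope ring_scope.

Section DotProduct.
Context {R : realType} {d : nat}.
Implicit Types (u v t : 'rV[R]_d).

Lemma dotpC u v : dotp u v = dotp v u.
Proof. by apply: eq_bigr => i _; rewrite mulrC. Qed.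

Lemma dotpDl u v t : dotp (u + v) t = dotp u t + dotp v t.
Proof. by rewrite /dotp -big_split; apply: eq_bigr => i _; rewrite mxE mulrDl. Qed.

Lemma dotpZl (a : R) u t : dotp (a *: u) t = a * dotp u t.
Proof. by rewrite /dotp mulr_sumr; apply: eq_bigr => i _; rewrite mxE mulrA. Qed.

Lemma dotp_suml n (u : 'I_n -> 'rV[R]_d) t :
  dotp (\sum_(i < n) u i) t = \sum_(i < n) dotp (u i) t.
Proof.
elim/big_ind2: _ => [|u1 s1 u2 s2 <- <-|//]; last exact: dotpDl.
by rewrite /dotp big1 // => i _; rewrite mxE mul0r.
Qed.

Lemma dotp_deltal (k : 'I_d) t : dotp (delta_mx 0 k) t = t 0 k.
Proof.
rewrite /dotp (bigD1 k) //= big1 ?addr0; first by rewrite mxE !eqxx mul1r.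
by move=> i ik; rewrite mxE eqxx /= (negbTE ik) mul0r.
Qed.

End DotProduct.

Section DirectionalDerivative.
Context {R : realType} {V : normedModType R}.

Lemma is_derive_lineP (W : normedModType R) (f : V -> W) (a v : V) (df : W) :
  is_derive a v f df <-> is_derive (0 : R) 1 (fun h : R => f (h *: v + a)) df.
Proof.
set g := fun h : R => f (h *: v + a).
have quotE : (fun h : R => h^-1 *: ((f \o shift a) (h *: v) - f a)) =
    (fun h : R => h^-1 *: ((g \o shift 0) (h *: 1) - g 0)).
  by apply/funext => h; rewrite /g /= addr0 scale0r add0r [h *: 1]mulr1.
have [derivableE deriveE] : (derivable f a v <-> derivable g 0 1) /\ 'D_v f a = 'D_1 g 0.
  by rewrite /derivable /derive quotE.
split=> -[dfa dfE]; apply: DeriveDef.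
- exact/derivableE.
- by rewrite -deriveE.
- exact/derivableE.
- by rewrite deriveE.
Qed.

Lemma derive_at_local_max (f : V -> R) (a v : V) :
  derivable f a v -> (\forall b \near a, f b <= f a) -> 'D_v f a = 0.
Proof.
move=> dfa amax; set Q := fun h : R => h^-1 *: ((f \o shift a) (h *: v) - f a).
have QE h : Q h = h^-1 * (f (h *: v + a) - f a) by [].
have lineQ : \forall h \near 0, f (h *: v + a) - f a <= 0.
  rewrite nbhs0P in amax; move: (near0Z v amax).
  by apply: filterS => h; rewrite subr_le0 addrC.
apply/eqP; rewrite eq_le; apply/andP; split.
- rewrite /derive (cvg_at_rightE Q) //.
  apply: limr_le; first by apply/cvg_ex; eexists; exact: cvg_dnbhs_at_right dfa.
  near=> h; rewrite QE mulr_ge0_le0 //.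
    by rewrite invr_ge0 ltW //; near: h; exact: nbhs_right_gt.
  by near: h; exact: cvg_within lineQ.
- rewrite /derive (cvg_at_leftE Q) //.
  apply: limr_ge; first by apply/cvg_ex; eexists; exact: cvg_dnbhs_at_left dfa.
  near=> h; rewrite QE mulr_le0 //.
    by rewrite invr_le0 ltW //; near: h; exact: nbhs_left_lt.
  by near: h; exact: cvg_within lineQ.
Unshelve. all: by end_near. Qed.

End DirectionalDerivative.

Lemma is_derive_ln_affine {R : realType} (c b : R) : 0 < c ->
  is_derive (0 : R) 1 (fun h : R => ln (c + h * b)) (b / c).
Proof.
move=> c_gt0.
have daffine : is_derive (0 : R) 1 (cst c + b \*: id) b.
  by apply: is_derive_eq; rewrite add0r [b *: 1]mulr1.
have dln : is_derive ((cst c + b \*: id) 0) 1 (@ln R) c^-1.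
  have -> : (cst c + b \*: id) 0 = c :> R by rewrite !fctE /= scaler0 addr0.
  exact: (is_derive1_ln c_gt0).
rewrite (_ : (fun h => _) = (@ln R) \o (cst c + b \*: id)); last first.
  by apply/funext => h /=; rewrite mulrC.
by apply: is_derive_eq (is_derive1_comp dln daffine) _; rewrite mulrC.
Qed.

Lemma lsupport_affine_gt0 {R : realType} {dX : measure_display} {X : measurableType dX}
    {nu : {measure set X -> \bar R}} {lam : R} {d : nat} {F : X -> 'rV[R]_d}
    {x : X} {t : 'rV[R]_d} :
  lam != 0 -> lsupport lam nu F x -> natparam lam nu F t ->
  0 < 1 + lam * dotp t (F x).
Proof.
move=> lam_neq0 suppx Th_t; rewrite ltNge; apply/negP => le0.
have := suppx t Th_t.
by rewrite /ldensity /lkernel (max_r le0) powR0 ?invr_eq0 // mul0r ltxx.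
Qed.

Section LambdaLikelihoodCritical.
Context {R : realType} {d n : nat} {lam : R} {phi : 'rV[R]_d -> R}.
Context {y : 'I_n -> 'rV[R]_d} {th : 'rV[R]_d}.
Local Notation c i := (1 + lam * dotp th (y i)).
Hypothesis c_gt0 : forall i, 0 < c i.
Hypotheses (lam_neq0 : lam != 0) (dphi : differentiable phi th).

Local Notation llik :=
  (fun t => \sum_(i < n) (lam^-1 * ln (1 + lam * dotp t (y i)) - phi t)).

Lemma is_derive_llik v :
  is_derive th v llik (\sum_(i < n) (dotp v (y i) / c i - 'D_v phi th)).
Proof.
have dphi_line : is_derive (0 : R) 1 (fun h : R => phi (h *: v + th)) ('D_v phi th).
  by rewrite -is_derive_lineP; apply: DeriveDef; first exact: diff_derivable.
apply/is_derive_lineP.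
have -> : (fun h : R => llik (h *: v + th)) = \sum_(i < n)
    (lam^-1 \*: (fun h => ln (c i + h * (lam * dotp v (y i))))
     - (fun h => phi (h *: v + th))).
  apply/funext => h; rewrite fct_sumE; apply: eq_bigr => i _ /=.
  by rewrite dotpDl dotpZl; congr (_ * ln _ - _); ring.
apply: is_derive_sum => i.
have dln := is_deriveZ lam^-1 (is_derive_ln_affine _ (lam * dotp v (y i)) (c_gt0 i)).
apply: is_derive_eq (is_deriveB dln dphi_line) _.
by congr (_ - _); rewrite [LHS]mulrA mulKf.
Qed.

Lemma scaled_grad_at_critical : (forall v, 'D_v llik th = 0) ->
  n%:R *: grad phi th = \sum_(i < n) (c i)^-1 *: y i.
Proof.
move=> crit; apply/rowP => k.
have [_] := is_derive_llik (delta_mx 0 k).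
rewrite crit sumrB sumr_const card_ord => /esym/eqP; rewrite subr_eq0 => /eqP sumE.
rewrite !mxE summxE mulr_natl -sumE; apply: eq_bigr => i _.
by rewrite mxE dotp_deltal mulrC.
Qed.

(* If [S = \sum_i (c i)^-1] vanishes, both sides are [0] since [0^-1 = 0]. *)
Lemma lgrad_eq_weighted_mean : (0 < n)%N ->
  n%:R *: grad phi th = \sum_(i < n) (c i)^-1 *: y i ->
  lgrad lam phi th = \sum_(i < n) lweight lam y th i *: y i.
Proof.
move=> n_gt0 gradE; set G := grad phi th; set S := \sum_(i < n) (c i)^-1.
have n_neq0 : n%:R != 0 :> R by rewrite pnatr_eq0 -lt0n.
have affineE i : lam * dotp (y i) th = c i - 1 by rewrite dotpC addrAC subrr add0r.
have denomE : n%:R * (1 - lam * dotp G th) = S.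
  rewrite mulrBr mulr1 mulrCA -dotpZl gradE dotp_suml mulr_sumr.
  rewrite (eq_bigr (fun i => 1 - (c i)^-1)) => [|i _].
    by rewrite sumrB sumr_const card_ord opprB addrC subrK.
  by rewrite dotpZl mulrCA affineE mulrBr mulVf ?mulr1 ?gt_eqF.
rewrite /lgrad -/G (_ : 1 - _ = S / n%:R); last by rewrite -denomE mulrAC divff ?mul1r.
transitivity (S^-1 *: \sum_(i < n) (c i)^-1 *: y i); last first.
  by rewrite scaler_sumr; apply: eq_bigr => i _; rewrite scalerA mulrC.
by rewrite -gradE scalerA invf_div mulrC.
Qed.

End LambdaLikelihoodCritical.

Theorem proposition1 (R : realType) (dX : measure_display) (X : measurableType dX)
  (nu : {measure set X -> \bar R}) (lam : R) (d n : nat) (F : X -> 'rV[R]_d)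
  (xs : 'I_n -> X) (thetahat : 'rV[R]_d) :
  standing_assumptions lam nu F ->
  (0 < n)%N ->
  (forall i, lsupport lam nu F (xs i)) ->
  natparam lam nu F thetahat ->
  (forall t, natparam lam nu F t ->
     loglik lam nu F (fun i => F (xs i)) t <= loglik lam nu F (fun i => F (xs i)) thetahat) ->
  lgrad lam (potential lam nu F) thetahat =
    \sum_(i < n) lweight lam (fun j => F (xs j)) thetahat i *: F (xs i).
Proof.
move=> [lam_lt0 _ open_Th [_ [diff_phi _ _ _ _]]] n_gt0 supp Th_hat hat_max.
set y := fun i => F (xs i).
have lam_neq0 : lam != 0 by rewrite lt_eqF.
have c_gt0 i : 0 < 1 + lam * dotp thetahat (y i).
  exact: lsupport_affine_gt0 lam_neq0 (supp i) Th_hat.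
have [dphi _] := diff_phi _ Th_hat.
have near_Th : \forall t \near thetahat, natparam lam nu F t.
  by move: open_Th; rewrite openE => /(_ _ Th_hat).
apply: lgrad_eq_weighted_mean => //.
apply: (scaled_grad_at_critical c_gt0 lam_neq0 dphi) => v.
apply: derive_at_local_max; first by case: (is_derive_llik c_gt0 lam_neq0 dphi v).
by apply: filterS near_Th => t /hat_max.
Qed.
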